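(* In every run of the algorithm described in the context, for every correct process $p_i$ and every $j\in\{1,\dots,n\}$, the following hold at every time: (R1) if $w\_sync_i[i]=w\_sync_i[j]=x$, then $p_i$ has sent $x$ messages of type $\textsc{write}(-,-)$ to $p_j$; (R2) if $w\_sync_i[i]>w\_sync_i[j]=x$, then $p_i$ has sent $x+1$ messages of type $\textsc{write}(-,-)$ to $p_j$.
   Context: Model. There are $n$ asynchronous processes $p_1,\dots,p_n$, of which up to $t<n/2$ may crash; a process runs its algorithm correctly until it crashes, and a process that never crashes is correct. Each ordered pair of processes is linked by a reliable (no loss, corruption, duplication or creation), asynchronous, not necessarily FIFO channel. $p_w$ is the single writer, invoking writes sequentially; $v_0$ is the initial value. Messages: $\textsc{write}(b,v)$ with $b\in\{0,1\}$, which stands for the two types $\textsc{write0}(v)$ and $\textsc{write1}(v)$; $\textsc{read}()$; $\textsc{proceed}()$. Variables of $p_i$. These are: $history_i$ with $history_i[0]=v_0$; $w\_sync_i[1..n]$, initially all $0$; $r\_sync_i[1..n]$, initially all $0$. $\mathsf{write}(v)$ by $p_w$: $wsn\gets w\_sync_w[w]+1$; $w\_sync_w[w]\gets wsn$; $history_w[wsn]\gets v$. Send $\textsc{write}(wsn\bmod 2,v)$ to each $p_j$ with $w\_sync_w[j]=wsn-1$. Wait until at least $n-t$ indices $j$ have $w\_sync_w[j]=wsn$. Return. $\mathsf{read}()$ by $p_i$: $r\_sync_i[i]\gets r\_sync_i[i]+1$ and call the new value $rsn$. Send $\textsc{read}()$ to all $p_j$ with $j\ne i$. Wait until at least $n-t$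 indices $j$ have $r\_sync_i[j]=rsn$. Let $sn\gets w\_sync_i[i]$. Wait until at least $n-t$ indices $j$ have $w\_sync_i[j]\ge sn$. Return $history_i[sn]$. On receipt of $\textsc{write}(b,v)$ from $p_j$ at $p_i$: Wait until $b=(w\_sync_i[j]+1)\bmod 2$. Let $wsn\gets w\_sync_i[j]+1$. If $wsn=w\_sync_i[i]+1$, then set $w\_sync_i[i]\gets wsn$ and $history_i[wsn]\gets v$, and send $\textsc{write}(wsn\bmod 2,v)$ to each $p_\ell$ with $w\_sync_i[\ell]=wsn-1$. Else, if $wsn<w\_sync_i[i]$, send $\textsc{write}((wsn+1)\bmod 2,history_i[wsn+1])$ to $p_j$. Finally set $w\_sync_i[j]\gets wsn$. On receipt of $\textsc{read}()$ from $p_j$ at $p_i$: Let $sn\gets w\_sync_i[i]$; wait until $w\_sync_i[j]\ge sn$; send $\textsc{proceed}()$ to $p_j$. On receipt of $\textsc{proceed}()$ from $p_j$ at $p_i$: $r\_sync_i[j]\gets r\_sync_i[j]+1$. Message handlers run concurrently; a waiting handler does not block the reception of other messages. *)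

From mathcomp Require Import all_boot.
Set Implicit Arguments.
Unset Strict Implicit.
Unset Printing Implicit Defensive.

Section Algorithm.

(* V : the type of register values, v0 the initial value,
   n processes indexed by 'I_n, t the crash bound, w the writer. *)
Context (V : Type) (v0 : V) (n t : nat) (w : 'I_n).

Inductive msg : Type :=
| MWrite of nat & V
| MRead
| MProceed.

Definition is_write (m : msg) : bool :=
  if m is MWrite _ _ then true else false.

(* A message in transit / a sent message: (sender, receiver, content). *)
Definition packet := ('I_n * 'I_n * msg)%type.

(* State of the (at most one) pending operation of a process. *)
Inductive opstate : Type :=
| Idle
| WWait of nat      (* write, waiting for n-t indices with w_sync[j] = wsn *)
| RWait1 of nat     (* read, waiting for n-t indices with r_sync[j] = rsn *)
| RWait2 of nat.    (* read, waiting for n-t indices with w_sync[j] >= sn *)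

(* Message-handler instances that have received their message and are
   blocked at their "wait until" statement. *)
Inductive handler : Type :=
| HWrite of 'I_n & nat & V   (* WRITE(b,v) received from p_j *)
| HRead of 'I_n & nat.       (* READ() received from p_j, with captured sn *)

Record pstate : Type := PState {
  history : nat -> V;
  w_sync  : 'I_n -> nat;
  r_sync  : 'I_n -> nat;
  op      : opstate;
  hdls    : seq handler;
  crashed : bool }.

Record config : Type := Config {
  procs : 'I_n -> pstate;
  net   : seq packet;     (* messages in transit (a multiset; non-FIFO) *)
  sent  : seq packet }.   (* log of every message ever sent *)

Definition upd {A : Type} (f : 'I_n -> A) (k : 'I_n) (a : A) : 'I_n -> A :=
  fun x => if x == k then a else f x.

Definition updn {A : Type} (f : nat -> A) (k : nat) (a : A) : nat -> A :=
  fun x => if x == k then a else f x.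

Definition init_pstate : pstate :=
  PState (fun _ => v0) (fun _ => 0) (fun _ => 0) Idle [::] false.

Definition init_config : config :=
  Config (fun _ => init_pstate) [::] [::].

Definition send (c : config) (ps : seq packet) (P : 'I_n -> pstate) : config :=
  Config P (net c ++ ps) (sent c ++ ps).

Definition with_proc (c : config) (i : 'I_n) (s : pstate) : 'I_n -> pstate :=
  upd (procs c) i s.

Definition ncrashed (c : config) : nat :=
  #|[pred k : 'I_n | crashed (procs c k)]|.

(* One atomic step of the system.  Local code between two "wait until"
   statements is executed atomically (together with the evaluation of the
   guard of the wait that precedes it). *)
Inductive step : config -> config -> Prop :=
| st_write_inv c v :
    let s := procs c w in
    ~~ crashed s -> op s = Idle ->
    let wsn := (w_sync s w).+1 in
    let ws' := upd (w_sync s) w wsn in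
    let s' := PState (updn (history s) wsn v) ws' (r_sync s) (WWait wsn)
                     (hdls s) (crashed s) in
    let ps := [seq (w, j, MWrite (wsn %% 2) v)
              | j <- enum 'I_n & ws' j == wsn - 1] in
    step c (send c ps (with_proc c w s'))
| st_write_ret c i wsn :
    let s := procs c i in
    ~~ crashed s -> op s = WWait wsn ->
    n - t <= #|[pred j : 'I_n | w_sync s j == wsn]| ->
    step c (Config (with_proc c i
              (PState (history s) (w_sync s) (r_sync s) Idle (hdls s)
                      (crashed s))) (net c) (sent c))
| st_read_inv c i :
    let s := procs c i in
    ~~ crashed s -> op s = Idle ->
    let rsn := (r_sync s i).+1 in
    let s' := PState (history s) (w_sync s) (upd (r_sync s) i rsn) (RWait1 rsn)
                     (hdls s) (crashed s) in
    let ps := [seq (i, j, MRead) | j <- enum 'I_n & j != i] in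
    step c (send c ps (with_proc c i s'))
(* read(): first wait satisfied; sn <- w_sync_i[i] *)
| st_read_mid c i rsn :
    let s := procs c i in
    ~~ crashed s -> op s = RWait1 rsn ->
    n - t <= #|[pred j : 'I_n | r_sync s j == rsn]| ->
    step c (Config (with_proc c i
              (PState (history s) (w_sync s) (r_sync s) (RWait2 (w_sync s i))
                      (hdls s) (crashed s))) (net c) (sent c))
(* read(): second wait satisfied; returns history_i[sn] *)
| st_read_ret c i sn :
    let s := procs c i in
    ~~ crashed s -> op s = RWait2 sn ->
    n - t <= #|[pred j : 'I_n | sn <= w_sync s j]| ->
    step c (Config (with_proc c i
              (PState (history s) (w_sync s) (r_sync s) Idle (hdls s)
                      (crashed s))) (net c) (sent c))
(* receipt of WRITE(b,v) from p_j at p_i: the handler starts and blocks *)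
| st_recv_write c i j b v s1 s2 :
    let s := procs c i in
    ~~ crashed s -> net c = s1 ++ (j, i, MWrite b v) :: s2 ->
    step c (Config (with_proc c i
              (PState (history s) (w_sync s) (r_sync s) (op s)
                      (HWrite j b v :: hdls s) (crashed s)))
              (s1 ++ s2) (sent c))
(* receipt of READ() from p_j at p_i: sn <- w_sync_i[i], then block *)
| st_recv_read c i j s1 s2 :
    let s := procs c i in
    ~~ crashed s -> net c = s1 ++ (j, i, MRead) :: s2 ->
    step c (Config (with_proc c i
              (PState (history s) (w_sync s) (r_sync s) (op s)
                      (HRead j (w_sync s i) :: hdls s) (crashed s)))
              (s1 ++ s2) (sent c))
| st_recv_proceed c i j s1 s2 :
    let s := procs c i in
    ~~ crashed s -> net c = s1 ++ (j, i, MProceed) :: s2 ->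
    step c (Config (with_proc c i
              (PState (history s) (w_sync s)
                      (upd (r_sync s) j (r_sync s j).+1) (op s)
                      (hdls s) (crashed s)))
              (s1 ++ s2) (sent c))
(* a blocked WRITE(b,v) handler of p_i (message from p_j) resumes;
   case wsn = w_sync_i[i] + 1 *)
| st_hwrite_new c i j b v h1 h2 :
    let s := procs c i in
    ~~ crashed s -> hdls s = h1 ++ HWrite j b v :: h2 ->
    b = (w_sync s j + 1) %% 2 ->
    let wsn := w_sync s j + 1 in
    wsn = w_sync s i + 1 ->
    let ws' := upd (w_sync s) i wsn in
    let ps := [seq (i, l, MWrite (wsn %% 2) v)
              | l <- enum 'I_n & ws' l == wsn - 1] in
    let s' := PState (updn (history s) wsn v) (upd ws' j wsn) (r_sync s)
                     (op s) (h1 ++ h2) (crashed s) in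
    step c (send c ps (with_proc c i s'))
| st_hwrite_old c i j b v h1 h2 :
    let s := procs c i in
    ~~ crashed s -> hdls s = h1 ++ HWrite j b v :: h2 ->
    b = (w_sync s j + 1) %% 2 ->
    let wsn := w_sync s j + 1 in
    wsn <> w_sync s i + 1 ->
    let ps := if wsn < w_sync s i
              then [:: (i, j, MWrite ((wsn + 1) %% 2) (history s (wsn + 1)))]
              else [::] in
    let s' := PState (history s) (upd (w_sync s) j wsn) (r_sync s)
                     (op s) (h1 ++ h2) (crashed s) in
    step c (send c ps (with_proc c i s'))
| st_hread c i j sn h1 h2 :
    let s := procs c i in
    ~~ crashed s -> hdls s = h1 ++ HRead j sn :: h2 ->
    sn <= w_sync s j ->
    let s' := PState (history s) (w_sync s) (r_sync s) (op s) (h1 ++ h2)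
                     (crashed s) in
    step c (send c [:: (i, j, MProceed)] (with_proc c i s'))
| st_crash c i :
    let s := procs c i in
    ~~ crashed s -> ncrashed c < t ->
    step c (Config (with_proc c i
              (PState (history s) (w_sync s) (r_sync s) (op s) (hdls s) true))
              (net c) (sent c)).

Definition is_run (r : nat -> config) : Prop :=
  r 0 = init_config /\
  forall k, step (r k) (r k.+1) \/ r k.+1 = r k.

Definition correct (r : nat -> config) (i : 'I_n) : Prop :=
  forall k, ~~ crashed (procs (r k) i).

Definition nb_write_sent (c : config) (i j : 'I_n) : nat :=
  count (fun p : packet => [&& p.1.1 == i, p.1.2 == j & is_write p.2]) (sent c).

Definition wsync (c : config) (i j : 'I_n) : nat := w_sync (procs c i) j.

End Algorithm.

(** The invariant behind both claims: for every process [p_i] and peer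
    [j <> i], [w_sync_i[j] <= w_sync_i[i]] and the number of writes sent from
    [p_i] to [p_j] is [w_sync_i[j]], plus one when [w_sync_i[j] <
    w_sync_i[i]] ([p_i] stays exactly one write ahead of a lagging peer).
    It is touched by only two kinds of steps.  When [p_i] advances its own
    counter, it broadcasts to exactly the peers that were level with it, who
    thereby become lagging by one (or level again, if the advance was caused
    by that very peer's write).  When [p_i] learns that a lagging peer
    advanced by one, it sends the next write iff the peer still lags.  The
    invariant holds for every process, crashed or not. *)
From mathcomp Require Import all_boot.
Set Implicit Arguments.
Unset Strict Implicit.
Unset Printing Implicit Defensive.

Definition link_inv (a b x : nat) : Prop := b <= a /\ x = b + (b < a).

Lemma link_inv_advance a b x : link_inv a b x -> link_inv a.+1 b (x + (b == a)).
Proof. by case=> ba ->; split; [exact: leqW | rewrite ltnS ba -addnA; case: ltngtP ba]. Qed.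

Lemma link_inv_catch_up a x : link_inv a a x -> link_inv a.+1 a.+1 x.+1.
Proof. by case=> _ ->; split; rewrite ?ltnn. Qed.

Lemma link_inv_peer_advance a b x :
  link_inv a b x -> b != a -> link_inv a b.+1 (x + (b.+1 < a)).
Proof.
case=> ba -> ab; have lt_ba : b < a by rewrite ltn_neqAle ab.
by split; rewrite // lt_ba addn1.
Qed.

Section Invariant.

Variables (V : Type) (n t : nat) (w : 'I_n).

Definition write_count (ps : seq (packet V n)) (i j : 'I_n) : nat :=
  count (fun p : packet V n => [&& p.1.1 == i, p.1.2 == j & is_write p.2]) ps.

Lemma nb_write_sent_send c ps P i j :
  nb_write_sent (send c ps P) i j = nb_write_sent c i j + write_count ps i j.
Proof. exact: count_cat. Qed.

Lemma write_count_nowrite ps i j :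
  ~~ has (fun p : packet V n => is_write p.2) ps -> write_count ps i j = 0.
Proof.
move=> ps_nw; apply/eqP; rewrite eqn0Ngt -has_count.
by apply: contra ps_nw; apply: sub_has => ? /and3P[].
Qed.

Lemma write_count_broadcast k (f : pred 'I_n) g (v : V) i j :
  write_count [seq (k, l, MWrite g v) | l <- enum 'I_n & f l] i j = (i == k) && f j.
Proof.
rewrite /write_count count_map count_filter.
rewrite (eq_count (a2 := fun l => (i == k) && f j && (l == j))); last first.
  by move=> l /=; rewrite andbT eq_sym; case: (eqVneq l j) => [->|_]; rewrite ?andbT ?andbF // andbC.
case: ((i == k) && f j); last by rewrite count_pred0.
by rewrite (count_uniq_mem j (enum_uniq 'I_n)) mem_enum.
Qed.

Definition sent_writes_inv (c : config V n) : Prop :=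
  forall i j, j != i -> link_inv (wsync c i i) (wsync c i j) (nb_write_sent c i j).

Lemma sent_writes_inv_init (v0 : V) : sent_writes_inv (init_config v0 n).
Proof. by []. Qed.

Lemma sent_writes_inv_send c k s ps :
  sent_writes_inv c ->
  (forall i j, i != k -> write_count ps i j = 0) ->
  (forall j, j != k ->
     link_inv (w_sync s k) (w_sync s j) (nb_write_sent c k j + write_count ps k j)) ->
  sent_writes_inv (send c ps (with_proc c k s)).
Proof.
move=> inv_c ps_k link_k i j; rewrite nb_write_sent_send /wsync /= /with_proc /upd.
have [-> /link_k//|ik ji] := eqVneq i k.
by rewrite ps_k // addn0; exact: inv_c.
Qed.

Lemma sent_writes_inv_send_nowrite c k s ps :
  sent_writes_inv c -> w_sync s = w_sync (procs c k) ->
  ~~ has (fun p : packet V n => is_write p.2) ps ->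
  sent_writes_inv (send c ps (with_proc c k s)).
Proof.
move=> inv_c ws_s ps_nw; apply: sent_writes_inv_send => // [i j _|j jk].
  exact: write_count_nowrite.
by rewrite write_count_nowrite // addn0 ws_s; exact: inv_c.
Qed.

Lemma sent_writes_inv_local c k s net' :
  sent_writes_inv c -> w_sync s = w_sync (procs c k) ->
  sent_writes_inv (Config (with_proc c k s) net' (sent c)).
Proof.
move=> inv_c ws_s i j /inv_c; rewrite /wsync /nb_write_sent /= /with_proc /upd.
by case: (eqVneq i k) => [->|]; rewrite ?ws_s.
Qed.

Lemma step_sent_writes_inv c c' :
  step t w c c' -> sent_writes_inv c -> sent_writes_inv c'.
Proof.
case=> {c c'}; try by move=> *; apply: sent_writes_inv_local.
- move=> c v s _ _ wsn ws' s' ps inv_c.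
  apply: sent_writes_inv_send => // [i j iw|j jw]; rewrite /ps write_count_broadcast.
    by rewrite (negbTE iw).
  rewrite eqxx /= /ws' /upd eqxx (negbTE jw) /wsn subn1.
  exact: link_inv_advance (inv_c _ _ jw).
- move=> c i s _ _ rsn s' ps inv_c.
  by apply: sent_writes_inv_send_nowrite => //; rewrite /ps has_map; apply/hasPn.
- move=> c i k b v h1 h2 s _ _ _ wsn ws_ki ws' ps s' inv_c.
  have ws_k : w_sync s k = w_sync s i by apply/eqP; rewrite -(eqn_add2r 1) -ws_ki.
  apply: sent_writes_inv_send => // [i' j ii|j ji]; rewrite /ps write_count_broadcast.
    by rewrite (negbTE ii).
  rewrite eqxx /= /ws' /upd eqxx (negbTE ji) if_same ws_ki addn1 subn1 /=.
  have := inv_c _ _ ji; case: eqVneq => [-> | _]; last exact: link_inv_advance.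
  by rewrite /wsync -/s ws_k eqxx addn1; exact: link_inv_catch_up.
- move=> c i k b v h1 h2 s _ _ _ wsn ws_ki ps s' inv_c.
  have write_count_ps i' j : write_count ps i' j = [&& i' == i, j == k & wsn < w_sync s i].
    by rewrite /ps; case: ifP => _; rewrite /write_count /= ?andbF ?andbT ?addn0 // eq_sym [k == j]eq_sym.
  apply: sent_writes_inv_send => // [i' j ii|j ji]; rewrite write_count_ps.
    by rewrite (negbTE ii).
  have ki : k != i by apply/eqP => ki; apply: ws_ki; rewrite /wsn ki.
  rewrite eqxx /s' /= /upd eq_sym (negbTE ki).
  case: eqVneq => [-> | _] /=; last by rewrite addn0; exact: inv_c.
  rewrite /wsn addn1; apply: link_inv_peer_advance; first exact: inv_c.
  by apply/eqP => ws_k; apply: ws_ki; rewrite /wsn ws_k.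
- move=> c i j sn h1 h2 s _ _ _ s' inv_c.
  exact: sent_writes_inv_send_nowrite.
Qed.

End Invariant.

Lemma run_sent_writes_inv (V : Type) (v0 : V) (n t : nat) (w : 'I_n) r :
  is_run v0 t w r -> forall k, sent_writes_inv (r k).
Proof.
case=> r0 r_step; elim=> [|k IH]; first by rewrite r0; exact: sent_writes_inv_init.
by case: (r_step k) => [/step_sent_writes_inv|->]; [apply|].
Qed.

Theorem lemma5 (V : Type) (v0 : V) (n t : nat) (w : 'I_n)
    (Hnt : 2 * t < n)
    (r : nat -> config V n) (Hrun : is_run v0 t w r)
    (i : 'I_n) (Hi : correct r i) (j : 'I_n) (Hji : j != i) (tm : nat) :
  (forall x : nat,
     wsync (r tm) i i = x -> wsync (r tm) i j = x ->
     nb_write_sent (r tm) i j = x) /\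
  (forall x : nat,
     x < wsync (r tm) i i -> wsync (r tm) i j = x ->
     nb_write_sent (r tm) i j = x.+1).
Proof.
have [_ ->] := run_sent_writes_inv Hrun tm Hji.
split=> x; first by move=> -> ->; rewrite ltnn addn0.
by move=> + ji; rewrite ji => ->; rewrite addn1.
Qed.
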